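(* Let $\mu,\sigma$ be non-uniformly stable matchings in $G$ and let $F=(\mu\setminus\sigma)\cup(\sigma\setminus\mu)$. Let $(v_1,\dots,v_{k+1})$ be a cycle in $F$ (i.e., $v_1,\dots,v_k$ distinct, $v_{k+1}=v_1$, and $e_\ell:=\{v_\ell,v_{\ell+1}\}\in F$ for all $\ell\in[k]$), and set $e_0:=e_k$. Then one of the following holds: (C1) $e_\ell\succ_{v_\ell}e_{\ell-1}$ for every $\ell\in[k]$; (C2) $e_{\ell-1}\succ_{v_\ell}e_\ell$ for every $\ell\in[k]$; (C3) $e_\ell\sim_{v_\ell}e_{\ell-1}$ for every $\ell\in[k]$.
   Context: Setting: $G=(V,E)$ is a finite simple bipartite graph with $V=V_1\sqcup V_2$, every edge joining a vertex of $V_1$ to a vertex of $V_2$; an edge is identified with the set of its two endpoints. $E$ is partitioned into $E_1,E_2$. For $F\subseteq E$ and $v\in V$, $F(v)$ is the set of edges of $F$ incident to $v$. For every $v\in V$ there is a transitive and complete binary relation $\succsim_v$ on $E(v)\cup\{\emptyset\}$ with $e\succsim_v\emptyset$ and $\emptyset\not\succsim_v e$ for all $e\in E(v)$; $e\succ_v f$ means $e\succsim_v f$ and $f\not\succsim_v e$; $e\sim_v f$ means both $e\succsim_v f$ and $f\succsim_v e$. A matching is $\mu\subseteq E$ with $|\mu(v)|\le1$ for all $v$; $\mu(v)$ denotes the edge of $\mu$ at $v$, or $\emptyset$. An edge $e\in E\setminus\mu$ weakly blocks $\mu$ if $e\succsim_v\mu(v)$ for every $v\in e$; it strongly blocks $\mu$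 if additionally $e\succ_w\mu(w)$ for some $w\in e$. $\mu$ is non-uniformly stable if no edge of $E_1\setminus\mu$ weakly blocks $\mu$ and no edge of $E_2\setminus\mu$ strongly blocks $\mu$. $[k]=\{1,\dots,k\}$. *)

From mathcomp Require Import all_boot.
Set Implicit Arguments. Unset Strict Implicit. Unset Printing Implicit Defensive.

Section Defs.
Variable V : finType.

(* Edges are 2-element vertex sets; the empty "edge" (unmatched) is set0. *)

Definition bipartite_graph (side : pred V) (E : {set {set V}}) : Prop :=
  forall e, e \in E -> exists x y, [/\ e = [set x; y], side x & ~~ side y].

Definition inc (F : {set {set V}}) (v : V) : {set {set V}} :=
  [set e in F | v \in e].

Definition pdom (E : {set {set V}}) (v : V) (e : {set V}) : bool :=
  (e \in inc E v) || (e == set0).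

Definition pref_ok (E : {set {set V}}) (pref : V -> {set V} -> {set V} -> bool) :
  Prop :=
  forall v,
    [/\ (forall a b c, pdom E v a -> pdom E v b -> pdom E v c ->
           pref v a b -> pref v b c -> pref v a c),
        (forall a b, pdom E v a -> pdom E v b -> pref v a b || pref v b a)
      & (forall e, e \in inc E v -> pref v e set0 && ~~ pref v set0 e)].

Definition spref (pref : V -> {set V} -> {set V} -> bool) v a b :=
  pref v a b && ~~ pref v b a.
Definition ipref (pref : V -> {set V} -> {set V} -> bool) v a b :=
  pref v a b && pref v b a.

Definition is_matching (E mu : {set {set V}}) : Prop :=
  mu \subset E /\ forall v, #|inc mu v| <= 1.

Definition medge (mu : {set {set V}}) (v : V) : {set V} :=
  if [pick e in inc mu v] is Some e then e else set0.

Definition weakly_blocks (pref : V -> {set V} -> {set V} -> bool)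
  (mu : {set {set V}}) (e : {set V}) : Prop :=
  e \notin mu /\ forall v, v \in e -> pref v e (medge mu v).

Definition strongly_blocks (pref : V -> {set V} -> {set V} -> bool)
  (mu : {set {set V}}) (e : {set V}) : Prop :=
  weakly_blocks pref mu e /\ exists2 w, w \in e & spref pref w e (medge mu w).

Definition nu_stable (E E1 : {set {set V}}) (pref : V -> {set V} -> {set V} -> bool)
  (mu : {set {set V}}) : Prop :=
  [/\ is_matching E mu,
      (forall e, e \in E1 -> ~ weakly_blocks pref mu e)
    & (forall e, e \in E :\: E1 -> ~ strongly_blocks pref mu e)].

End Defs.

From mathcomp Require Import all_boot zify.
Set Implicit Arguments.
Unset Strict Implicit.
Unset Printing Implicit Defensive.

(* Since mu and sigma are matchings, the two cycle edges at a vertex are its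
   mu-edge and its sigma-edge, so the edges of the cycle alternate between
   mu \ sigma and sigma \ mu.  If an edge e_l of A \ B ({A, B} = {mu, sigma})
   is weakly preferred at both endpoints to its two neighbours on the cycle,
   which are the B-edges there, then e_l weakly blocks B; stability of B then
   forces both preferences to be ties.  Hence a strict preference at one
   vertex propagates forwards around the whole cycle (C1), or backwards
   (C2), and if there is none every vertex is indifferent (C3). *)

Definition csucc (k l : nat) : nat := if l == k then 1 else l.+1.
Definition cpred (k l : nat) : nat := if l == 1 then k else l.-1.

Section CyclicIndex.
Variables k l : nat.
Hypothesis l_range : 1 <= l <= k.

Lemma csucc_range : 1 <= csucc k l <= k.
Proof. by rewrite /csucc; case: ifP => ?; lia. Qed.

Lemma cpred_range : 1 <= cpred k l <= k.
Proof. by rewrite /cpred; case: ifP => ?; lia. Qed.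

Lemma cpred_csucc : cpred k (csucc k l) = l.
Proof.
by rewrite /csucc /cpred; case: (l =P k) => [->|?]; rewrite ?eqxx //; case: ifP => ?; lia.
Qed.

Lemma cpred_eq_csucc : k <= 2 -> cpred k l = csucc k l.
Proof. by rewrite /csucc /cpred; repeat case: ifP => ?; lia. Qed.

End CyclicIndex.

Lemma cycle_closed_all (k : nat) (S : pred nat) :
  (forall l, 1 <= l <= k -> S l -> S (csucc k l)) ->
  forall l0 m, 1 <= l0 <= k -> 1 <= m <= k -> S l0 -> S m.
Proof.
move=> closedS l0 m Hl0 Hm S0.
have fwd d i : 1 <= i -> i + d <= k -> S i -> S (i + d).
  elim: d => [|d IH] Hi Hid Si; first by rewrite addn0.
  have -> : i + d.+1 = csucc k (i + d) by rewrite /csucc; case: ifP => ?; lia.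
  by apply: closedS; [lia | apply: IH => //; lia].
have Sk : S k by have := fwd (k - l0) l0; rewrite subnKC; [apply | ]; lia.
have S1 : S 1 by have := closedS k _ Sk; rewrite /csucc eqxx; apply; lia.
by have := fwd m.-1 1; rewrite add1n prednK; [apply | ]; lia.
Qed.

Lemma cyclic_trichotomy (k : nat) (P Q : pred nat) :
  (forall l, 1 <= l <= k -> P l || Q l) ->
  (forall l, 1 <= l <= k -> P l -> Q (csucc k l) -> Q l && P (csucc k l)) ->
  [\/ forall l, 1 <= l <= k -> P l && ~~ Q l,
      forall l, 1 <= l <= k -> Q l && ~~ P l
    | forall l, 1 <= l <= k -> P l && Q l].
Proof.
move=> PQ step.
have in_range l : (l \in iota 1 k) = (1 <= l <= k) by rewrite mem_iota add1n ltnS.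
case: (boolP (has (fun l => P l && ~~ Q l) (iota 1 k))) => [/hasP[l0]|noP].
  rewrite in_range => Hl0 S0; constructor 1 => m Hm.
  apply: (cycle_closed_all (S := fun l => P l && ~~ Q l) _ Hl0 Hm S0) => l Hl /andP[Pl nQl].
  have nQs : ~~ Q (csucc k l) by apply: contra nQl => /(step l Hl Pl)/andP[].
  by rewrite nQs andbT; have := PQ _ (csucc_range Hl); rewrite (negbTE nQs) orbF.
case: (boolP (has (fun l => Q l && ~~ P l) (iota 1 k))) => [/hasP[l0]|noQ].
  rewrite in_range => Hl0 S0; constructor 2 => m Hm.
  apply: contraLR S0 => nSm.
  apply: (cycle_closed_all (S := predC (fun l => Q l && ~~ P l)) _ Hm Hl0 nSm) => l Hl /=.
  apply: contra => /andP[Qs nPs].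
  have nPl : ~~ P l by apply: contra nPs => Pl; case/andP: (step l Hl Pl Qs).
  by rewrite nPl andbT; have := PQ l Hl; rewrite (negbTE nPl).
constructor 3 => l Hl.
have /hasPn/(_ l) := noP; have /hasPn/(_ l) := noQ; rewrite in_range Hl.
by move=> /(_ isT) nQP /(_ isT); move: (PQ l Hl) nQP; case: (P l); case: (Q l).
Qed.

Section MatchingEdges.
Variables (V : finType) (A : {set {set V}}).
Hypothesis inc_le1 : forall w, #|inc A w| <= 1.

Lemma matching_edge_unique (w : V) (x y : {set V}) :
  x \in A -> w \in x -> y \in A -> w \in y -> x = y.
Proof.
move=> xA wx yA wy; apply: (card_le1_eqP (inc_le1 w)); by rewrite inE ?xA ?yA ?wx ?wy.
Qed.

Lemma medgeE (w : V) (x : {set V}) : x \in A -> w \in x -> medge A w = x.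
Proof.
move=> xA wx; rewrite /medge; case: pickP => [y|/(_ x)]; last by rewrite inE xA wx.
by rewrite inE => /andP[yA wy]; apply: (matching_edge_unique yA wy xA wx).
Qed.

Lemma sym_diff_other_edge (B : {set {set V}}) (w : V) (x y : {set V}) :
  x \in A -> w \in x -> w \in y -> y != x ->
  y \in (A :\: B) :|: (B :\: A) -> y \in B.
Proof.
move=> xA wx wy yx; rewrite !inE => /orP[/andP[_ yA]|/andP[_ ->]] //.
by rewrite (matching_edge_unique yA wy xA wx) eqxx in yx.
Qed.

End MatchingEdges.

Section StableEdges.
Variables (V : finType) (E E1 : {set {set V}}).
Variable pref : V -> {set V} -> {set V} -> bool.

Lemma nu_stable_tie (B : {set {set V}}) (a b : V) :
  nu_stable E E1 pref B -> [set a; b] \in E -> [set a; b] \notin B ->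
  pref a [set a; b] (medge B a) -> pref b [set a; b] (medge B b) ->
  pref a (medge B a) [set a; b] && pref b (medge B b) [set a; b].
Proof.
case=> _ no_weak no_strong abE abB Pa Pb.
have blocks : weakly_blocks pref B [set a; b] by split=> // w /set2P[] ->.
have abE2 : [set a; b] \in E :\: E1.
  by rewrite in_setD abE andbT; apply/negP => /no_weak.
apply/negPn/negP; rewrite negb_and => not_tie.
apply: (no_strong _ abE2); split=> //.
case/orP: not_tie => [nA | nB]; [exists a | exists b];
  by rewrite ?set21 ?set22 // /spref ?Pa ?Pb.
Qed.

Lemma alternating_edge_tie (A B : {set {set V}}) (a b : V) (x y z : {set V}) :
  x = [set a; b] -> is_matching E A -> nu_stable E E1 pref B ->
  x \in A :\: B ->
  y \in (A :\: B) :|: (B :\: A) -> a \in y -> y != x ->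
  z \in (A :\: B) :|: (B :\: A) -> b \in z -> z != x ->
  pref a x y -> pref b x z -> pref a y x && pref b z x.
Proof.
move=> -> [AE inc_le1] HB; rewrite in_setD => /andP[xB xA] yF ay yx zF bz zx.
have [[_ inc_le1B] _ _] := HB.
have yB := sym_diff_other_edge inc_le1 xA (set21 a b) ay yx yF.
have zB := sym_diff_other_edge inc_le1 xA (set22 a b) bz zx zF.
rewrite -(medgeE inc_le1B yB ay) -(medgeE inc_le1B zB bz).
by apply: nu_stable_tie => //; apply: (subsetP AE).
Qed.

Lemma sym_diff_edge_tie (A B : {set {set V}}) (a b : V) (x y z : {set V}) :
  nu_stable E E1 pref A -> nu_stable E E1 pref B -> x = [set a; b] ->
  x \in (A :\: B) :|: (B :\: A) ->
  y \in (A :\: B) :|: (B :\: A) -> a \in y -> y != x ->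
  z \in (A :\: B) :|: (B :\: A) -> b \in z -> z != x ->
  pref a x y -> pref b x z -> pref a y x && pref b z x.
Proof.
move=> HA HB xab; have [A_match _ _] := HA; have [B_match _ _] := HB.
rewrite inE => /orP[xAB | xBA]; first exact: (alternating_edge_tie xab A_match HB).
by rewrite setUC; apply: (alternating_edge_tie xab B_match HA).
Qed.

End StableEdges.

Section CycleEdges.
Variables (V : finType) (k : nat) (v : nat -> V).
Hypothesis v_inj : forall i j, 1 <= i <= k -> 1 <= j <= k -> v i = v j -> i = j.
Hypothesis v_close : v k.+1 = v 1.

Definition cycle_edge (l : nat) : {set V} :=
  if l == 0 then [set v k; v k.+1] else [set v l; v l.+1].

Lemma cycle_edges_mem (F : {set {set V}}) l :
  (forall l, 1 <= l <= k -> [set v l; v l.+1] \in F) ->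
  1 <= l <= k -> cycle_edge l \in F /\ cycle_edge l.-1 \in F.
Proof.
by move=> edgesF Hl; split; case: l Hl => [|[|l]] Hl; apply: edgesF; lia.
Qed.

Lemma cycle_edgeE l : 1 <= l <= k -> cycle_edge l = [set v l; v (csucc k l)].
Proof.
case: l => [|l] // _; rewrite /cycle_edge /csucc /=.
by case: eqP => // Ek; rewrite -v_close -Ek.
Qed.

Lemma cycle_edge_pred l : 1 <= l <= k -> cycle_edge l.-1 = [set v (cpred k l); v l].
Proof. by case: l => [|[|l]] //= _; rewrite /cycle_edge /= v_close. Qed.

Lemma cycle_edge_succ_pred l : 1 <= l <= k -> cycle_edge (csucc k l).-1 = cycle_edge l.
Proof.
by move=> Hl; rewrite cycle_edge_pred ?csucc_range // cpred_csucc // cycle_edgeE.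
Qed.

Lemma cycle_edge_pred_eq l : k <= 2 -> 1 <= l <= k -> cycle_edge l.-1 = cycle_edge l.
Proof.
by move=> k_le2 Hl; rewrite cycle_edge_pred // cycle_edgeE // cpred_eq_csucc // setUC.
Qed.

Lemma cycle_edge_pred_neq l : 2 < k -> 1 <= l <= k -> cycle_edge l.-1 != cycle_edge l.
Proof.
move=> k_gt2 Hl; rewrite cycle_edge_pred // cycle_edgeE //; apply/eqP => same.
have : v (csucc k l) \in [set v (cpred k l); v l] by rewrite same set22.
have [succ_r pred_r] := (csucc_range Hl, cpred_range Hl).
case/set2P => [/(v_inj succ_r pred_r) | /(v_inj succ_r Hl)];
  by rewrite /csucc /cpred; repeat case: ifP => ?; lia.
Qed.

Lemma cycle_vertex_mem l : 1 <= l <= k ->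
  v l \in cycle_edge l /\ v l \in cycle_edge l.-1.
Proof. by move=> Hl; rewrite cycle_edge_pred // cycle_edgeE // set21 set22. Qed.

End CycleEdges.

Theorem lemma5p2 (V : finType) (side : pred V) (E E1 : {set {set V}})
  (pref : V -> {set V} -> {set V} -> bool)
  (HG : bipartite_graph side E) (HE1 : E1 \subset E) (Hpref : pref_ok E pref)
  (mu sigma : {set {set V}})
  (Hmu : nu_stable E E1 pref mu) (Hsigma : nu_stable E E1 pref sigma)
  (k : nat) (v : nat -> V)
  (Hdist : forall i j, 1 <= i <= k -> 1 <= j <= k -> v i = v j -> i = j)
  (Hclose : v k.+1 = v 1)
  (Hedges : forall l, 1 <= l <= k ->
     [set v l; v l.+1] \in (mu :\: sigma) :|: (sigma :\: mu)) :
  let e := fun l : nat => if l == 0 then [set v k; v k.+1] else [set v l; v l.+1] in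
  (forall l, 1 <= l <= k -> spref pref (v l) (e l) (e l.-1)) \/
  (forall l, 1 <= l <= k -> spref pref (v l) (e l.-1) (e l)) \/
  (forall l, 1 <= l <= k -> ipref pref (v l) (e l) (e l.-1)).
Proof.
rewrite -/(cycle_edge k v) /spref /ipref.
set F := mu :\: sigma :|: sigma :\: mu.
pose P l := pref (v l) (cycle_edge k v l) (cycle_edge k v l.-1).
pose Q l := pref (v l) (cycle_edge k v l.-1) (cycle_edge k v l).
have FE : F \subset E.
  have [[muE _] _ _] := Hmu; have [[sigmaE _] _ _] := Hsigma.
  by rewrite subUset (subset_trans (subsetDl _ _) muE) (subset_trans (subsetDl _ _) sigmaE).
have PQ l : 1 <= l <= k -> P l || Q l.
  move=> Hl; have [_ complete _] := Hpref (v l).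
  have [xF yF] := cycle_edges_mem Hedges Hl; have [vx vy] := cycle_vertex_mem Hclose Hl.
  by apply: complete; rewrite /pdom inE ?(subsetP FE _ xF) ?(subsetP FE _ yF) ?vx ?vy.
case: (leqP k 2) => [k_le2 | k_gt2].
  right; right => l Hl; rewrite cycle_edge_pred_eq //.
  by have := PQ l Hl; rewrite /P /Q cycle_edge_pred_eq // orbb => ->.
have step l : 1 <= l <= k -> P l -> Q (csucc k l) -> Q l && P (csucc k l).
  move=> Hl; rewrite /P /Q cycle_edge_succ_pred //.
  have l'_range := csucc_range Hl.
  have [xF yF] := cycle_edges_mem Hedges Hl; have [zF _] := cycle_edges_mem Hedges l'_range.
  have [_ vy] := cycle_vertex_mem Hclose Hl; have [vz _] := cycle_vertex_mem Hclose l'_range.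
  have neq := cycle_edge_pred_neq Hdist Hclose k_gt2.
  have zx : cycle_edge k v (csucc k l) != cycle_edge k v l.
    by rewrite -(cycle_edge_succ_pred Hclose Hl) eq_sym neq.
  exact: (sym_diff_edge_tie Hmu Hsigma (cycle_edgeE Hclose Hl) xF yF vy (neq l Hl) zF vz zx).
by case: (cyclic_trichotomy PQ step) => [C1 | C2 | C3]; [left | right; left | right; right].
Qed.
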